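(* Let $N=\{1,\dots,n\}$ and let $F:2^N\to\mathbb{R}$ be quasi-submodular. Let $Q_1=\{i\in N: F(i\mid\emptyset)<0\}$ and $S_1=\{i\in N: F(i\mid N-i)\le 0\}$. Then every global minimizer of $F$ lies in $[Q_1,S_1]$, i.e., for every $X_*\in\arg\min_{X\subseteq N}F(X)$, $Q_1\subseteq X_*\subseteq S_1$.
   Context: For $A\subseteq N$ and $i\in N$, write $A+i=A\cup\{i\}$, $A-i=A\setminus\{i\}$, and $F(i\mid A)=F(A+i)-F(A)$. $F$ is quasi-submodular if for all $X,Y\subseteq N$ both hold: $F(X\cap Y)\ge F(X)\Rightarrow F(Y)\ge F(X\cup Y)$, and $F(X\cap Y)>F(X)\Rightarrow F(Y)>F(X\cup Y)$. $[A,B]=\{U: A\subseteq U\subseteq B\}$. *)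

From HB Require Import structures.
From mathcomp Require Import all_boot all_order all_algebra.
From mathcomp Require Import reals.
Set Implicit Arguments. Unset Strict Implicit. Unset Printing Implicit Defensive.
Import Order.TTheory GRing.Theory Num.Theory.
Local Open Scope ring_scope.

(* Ground set N = {1,...,n} is modelled as 'I_n; subsets are {set 'I_n}. *)

Definition marg (R : realType) (n : nat) (F : {set 'I_n} -> R)
  (i : 'I_n) (A : {set 'I_n}) : R := F (i |: A) - F A.

Definition quasi_submodular (R : realType) (n : nat) (F : {set 'I_n} -> R) : Prop :=
  forall X Y : {set 'I_n},
    (F X <= F (X :&: Y) -> F (X :|: Y) <= F Y) /\
    (F X < F (X :&: Y) -> F (X :|: Y) < F Y).

Definition is_global_minimizer (R : realType) (n : nat) (F : {set 'I_n} -> R)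
  (X : {set 'I_n}) : Prop := forall Y : {set 'I_n}, F X <= F Y.

Definition Q1 (R : realType) (n : nat) (F : {set 'I_n} -> R) : {set 'I_n} :=
  [set i | marg F i set0 < 0].

Definition S1 (R : realType) (n : nat) (F : {set 'I_n} -> R) : {set 'I_n} :=
  [set i | marg F i ([set: 'I_n] :\ i) <= 0].

From HB Require Import structures.
From mathcomp Require Import all_boot all_order all_algebra.
From mathcomp Require Import reals.
Import Order.TTheory GRing.Theory Num.Theory.
Local Open Scope ring_scope.

(* Each inclusion is a single application of quasi-submodularity to a
   minimizer X.  If F({i}) < F(emptyset) and i is not in X, then {i} and X are
   disjoint, so the strict clause gives F(X + i) < F(X), contradicting
   minimality.  If i is in X, then X and N - i cover N, and minimality gives
   F(X) <= F(X - i), so the weak clause yields F(N) <= F(N - i). *)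

Section QuasiSubmodularMinimizers.

Variables (R : realType) (n : nat) (F : {set 'I_n} -> R).
Hypothesis qsF : quasi_submodular F.
Variable X : {set 'I_n}.
Hypothesis minX : is_global_minimizer F X.

Lemma minimizer_mem_of_marg0_lt0 (i : 'I_n) : marg F i set0 < 0 -> i \in X.
Proof.
rewrite /marg setU0 subr_lt0 => Fi_lt_F0.
apply/negPn/negP => iNX.
have disj : [set i] :&: X = set0.
  by apply/setP => j; rewrite !inE; case: eqP => // ->; rewrite (negbTE iNX).
have [_ strict] := qsF [set i] X.
rewrite disj in strict.
by have := strict Fi_lt_F0; rewrite ltNge minX.
Qed.

Lemma marg_setD1_le0_of_minimizer (i : 'I_n) :
  i \in X -> marg F i ([set: 'I_n] :\ i) <= 0.
Proof.
move=> iX; rewrite /marg subr_le0 setD1K ?inE //.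
have cover : X :|: [set: 'I_n] :\ i = [set: 'I_n].
  by apply/setP => j; rewrite !inE; case: eqP => [->|]; rewrite ?iX ?orbT.
have [weak _] := qsF X ([set: 'I_n] :\ i).
by rewrite cover in weak; exact: weak (minX _).
Qed.

End QuasiSubmodularMinimizers.

Theorem lemma2 (R : realType) (n : nat) (F : {set 'I_n} -> R) :
  quasi_submodular F ->
  forall Xs : {set 'I_n}, is_global_minimizer F Xs ->
    Q1 F \subset Xs /\ Xs \subset S1 F.
Proof.
move=> qsF Xs minXs; split; apply/subsetP => i; rewrite inE.
- exact: minimizer_mem_of_marg0_lt0.
- exact: marg_setD1_le0_of_minimizer.
Qed.
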